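(* Let $A\in\mathbb{R}^{n\times n}$, $B\in\mathbb{R}^{n\times k}$ and $F\in\mathbb{R}^{k\times n}$ be fixed. For $C\in\mathbb{R}^{m\times n}$ let $\Omega(C,F)=[C;\,C(A+BF);\,\dots;\,C(A+BF)^{n-1}]$ and let $\mathcal{V}^*(C)$ be the maximal $(A,B)$-invariant subspace contained in $\operatorname{Ker}C$. Define $BR1_a=\arg\min_{C\in\mathbb{R}^{m\times n}}\dim\operatorname{Ker}\Omega(C,F)$, $BR2_a=\arg\min_{C\in BR1_a}\dim\mathcal{V}^*(C)$ and $BR2X_a=\arg\min_{C\in\mathbb{R}^{m\times n}}\dim\mathcal{V}^*(C)$. If $\dim\operatorname{Ker}\Omega(C,F)=\dim\mathcal{V}^*(C)$ for every $C\in BR1_a$, then $BR1_a=BR2_a\subseteq BR2X_a$.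
   Context: A subspace $\mathcal{V}\subseteq\mathbb{R}^n$ is $(A,B)$-invariant if there exists a matrix $F'$ with $(A+BF')\mathcal{V}\subseteq\mathcal{V}$. Among all $(A,B)$-invariant subspaces contained in $\operatorname{Ker}C$ there is a maximal one, $\mathcal{V}^*(C)$. *)

(* Convention: MathComp matrices act on ROW vectors, so a subspace of R^n is
   represented by a square matrix V : 'M_n whose ROW space is the subspace,
   and a vector x in R^n is a row vector; the paper's "M x" (column action)
   becomes "x *m M^T". *)
From HB Require Import structures.
From mathcomp Require Import all_boot all_order all_algebra.
From mathcomp Require Import reals.
From Stdlib Require Import ClassicalEpsilon.
Set Implicit Arguments. Unset Strict Implicit. Unset Printing Implicit Defensive.
Import Order.TTheory GRing.Theory Num.Theory.
Local Open Scope ring_scope.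

Section Defs.
Variables (R : realType) (n k : nat) (A : 'M[R]_n) (B : 'M[R]_(n, k)).

Definition Ker (m : nat) (C : 'M[R]_(m, n)) : 'M[R]_n := kermx C^T.

Definition ABinvariant (V : 'M[R]_n) : Prop :=
  exists F' : 'M[R]_(k, n), stablemx V (A + B *m F')^T.

Definition is_Vstar (m : nat) (C : 'M[R]_(m, n)) (V : 'M[R]_n) : Prop :=
  [/\ ABinvariant V, (V <= Ker C)%MS &
      forall W : 'M[R]_n, ABinvariant W -> (W <= Ker C)%MS -> (W <= V)%MS].

Definition Vstar (m : nat) (C : 'M[R]_(m, n)) : 'M[R]_n :=
  epsilon (inhabits 0) (is_Vstar C).

Definition dimVstar (m : nat) (C : 'M[R]_(m, n)) : nat := \rank (Vstar C).

Definition Omega (m : nat) (C : 'M[R]_(m, n)) (F : 'M[R]_(k, n)) :=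
  \mxcol_(i < n) (C *m (A + B *m F) ^+ i).

Definition dimKerOmega (m : nat) (C : 'M[R]_(m, n)) (F : 'M[R]_(k, n)) : nat :=
  \rank (Ker (Omega C F)).

Definition BR1a (m : nat) (F : 'M[R]_(k, n)) (C : 'M[R]_(m, n)) : Prop :=
  forall C' : 'M[R]_(m, n), (dimKerOmega C F <= dimKerOmega C' F)%N.

Definition BR2a (m : nat) (F : 'M[R]_(k, n)) (C : 'M[R]_(m, n)) : Prop :=
  BR1a F C /\ forall C' : 'M[R]_(m, n), BR1a F C' -> (dimVstar C <= dimVstar C')%N.

Definition BR2Xa (m : nat) (C : 'M[R]_(m, n)) : Prop :=
  forall C' : 'M[R]_(m, n), (dimVstar C <= dimVstar C')%N.

End Defs.

(* Ker Omega(C,F) is the unobservable subspace of (C, A+BF): it lies in Ker C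
   and, by Cayley-Hamilton, is (A+BF)-invariant, hence (A,B)-invariant and so
   contained in V*(C).  Thus dim Ker Omega(C,F) <= dim V*(C) for every C, and
   when equality holds on BR1_a, a minimiser of dim Ker Omega also minimises
   dim V*, both among BR1_a and over all C. *)
From HB Require Import structures.
From mathcomp Require Import all_boot all_order all_algebra.
From mathcomp Require Import reals boolp.
From Stdlib Require Import ClassicalEpsilon.
Set Implicit Arguments. Unset Strict Implicit. Unset Printing Implicit Defensive.
Import GRing.Theory.
Local Open Scope ring_scope.

Lemma horner_mx_coef (R : comNzRingType) n (M : 'M[R]_n.+1) (p : {poly R}) :
  horner_mx M p = \sum_(i < size p) p`_i *: M ^+ i.
Proof.
rewrite /horner_mx /horner_morph (horner_coef_wide _ (size_poly _ _)).
by apply: eq_bigr => i _; rewrite coef_poly ltn_ord -mul_scalar_mx.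
Qed.

Lemma Cayley_Hamilton_exp (R : comNzRingType) n (M : 'M[R]_n) :
  M ^+ n = - \sum_(i < n) (char_poly M)`_i *: M ^+ i.
Proof.
case: n M => [|n] M; first by rewrite !flatmx0.
have := Cayley_Hamilton M.
rewrite horner_mx_coef size_char_poly big_ord_recr /=.
have /monicP := char_poly_monic M; rewrite lead_coefE size_char_poly => ->.
by rewrite scale1r => /eqP; rewrite addrC addr_eq0 => /eqP.
Qed.

Lemma mulmx_Cayley_Hamilton_exp_eq0 (R : comNzRingType) n (M : 'M[R]_n) p q
    (X : 'M[R]_(p, n)) (Y : 'M[R]_(n, q)) :
  (forall i : 'I_n, X *m M ^+ i *m Y = 0) -> X *m M ^+ n *m Y = 0.
Proof.
move=> XY0; rewrite Cayley_Hamilton_exp mulmxN mulNmx mulmx_sumr mulmx_suml.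
by rewrite big1 ?oppr0 // => i _; rewrite -scalemxAr -scalemxAl XY0 scaler0.
Qed.

Lemma sub_KerE (R : realType) n m (C : 'M[R]_(m, n)) p (W : 'M[R]_(p, n)) :
  (W <= Ker C)%MS = (C *m W^T == 0).
Proof. by rewrite /Ker sub_kermx -trmx_eq0 trmx_mul trmxK. Qed.

Lemma sub_Ker_mxcolP (R : realType) n r (p_ : 'I_r -> nat)
    (C_ : forall i, 'M[R]_(p_ i, n)) p (W : 'M[R]_(p, n)) :
  reflect (forall i, C_ i *m W^T = 0) (W <= Ker (\mxcol_i C_ i))%MS.
Proof.
rewrite sub_KerE mxcol_mul -(mxcol0 (p_ := p_)).
by apply: (iffP eqP) => [/eq_mxcolP | /eq_mxcolP].
Qed.

Section ABinvariance.
Variables (R : realType) (n k : nat) (A : 'M[R]_n) (B : 'M[R]_(n, k)).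

Lemma ABinvariantP (V : 'M[R]_n) :
  ABinvariant A B V <-> (V *m A^T <= V + B^T)%MS.
Proof.
split=> [[F' VF'] | VAB].
  rewrite linearD /= trmx_mul mulmxDr mulmxA in VF'.
  rewrite -[V *m A^T](addrK ((V *m F'^T) *m B^T)).
  by apply: addmx_sub_adds => //; rewrite -mulNmx submxMl.
have /sub_addsmxP[u V0A] : (row_base V *m A^T <= V + B^T)%MS.
  by rewrite (eqmxMr _ (eq_row_base V)).
(* The feedback must solve [row_base V *m F'^T = - u.2], which the right
   inverse E of the row-free basis makes possible. *)
have [E V0E] := row_freeP (row_base_free V).
exists (- (E *m u.2))^T; rewrite -stablemx_row_base.
rewrite linearD /= trmx_mul trmxK mulmxDr V0A mulmxA mulmxN mulNmx.
by rewrite mulmxA V0E mul1mx addrK eq_row_base submxMl.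
Qed.

Lemma ABinvariant0 : ABinvariant A B 0.
Proof. by exists 0; rewrite mul0mx sub0mx. Qed.

Lemma ABinvariant_adds (V W : 'M[R]_n) :
  ABinvariant A B V -> ABinvariant A B W -> ABinvariant A B (V + W)%MS.
Proof.
move=> /ABinvariantP VAB /ABinvariantP WAB; apply/ABinvariantP.
rewrite addsmxMr addsmx_sub.
apply/andP; split; [apply: submx_trans VAB _ | apply: submx_trans WAB _].
  by rewrite addsmxS ?addsmxSl.
by rewrite addsmxS ?addsmxSr.
Qed.

(* A subspace of maximal rank among the (A,B)-invariant subspaces of K absorbs
   every other one, since their sum is again (A,B)-invariant and inside K. *)
Lemma exists_max_ABinvariant (K : 'M[R]_n) :
  exists V, [/\ ABinvariant A B V, (V <= K)%MS &
    forall W, ABinvariant A B W -> (W <= K)%MS -> (W <= V)%MS].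
Proof.
pose admissible (V : 'M[R]_n) := ABinvariant A B V /\ (V <= K)%MS.
pose P d := `[< exists V, admissible V /\ \rank V = d >].
have P0 : exists d, P d.
  exists 0%N; apply/asboolP; exists 0; rewrite mxrank0.
  by split=> //; split; [exact: ABinvariant0 | exact: sub0mx].
have Pn d : P d -> (d <= n)%N.
  by move/asboolP=> [V [_ <-]]; apply: rank_leq_col.
case: (ex_maxnP P0 Pn) => d /asboolP[V [[VAB VK] rkV]] maxd.
exists V; split=> // W WAB WK.
have VW : admissible (V + W)%MS.
  by split; [exact: ABinvariant_adds | rewrite addsmx_sub VK WK].
have rkVW : (\rank (V + W)%MS <= \rank V)%N.
  by rewrite rkV; apply: maxd; apply/asboolP; exists (V + W)%MS.
have [_ eqVW] := mxrank_leqif_sup (addsmxSl V W).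
apply: submx_trans (addsmxSr V W) _.
by rewrite -eqVW eqn_leq rkVW mxrankS ?addsmxSl.
Qed.

Lemma Vstar_spec m (C : 'M[R]_(m, n)) : is_Vstar A B C (Vstar A B C).
Proof. by apply: epsilon_spec; apply: exists_max_ABinvariant. Qed.

End ABinvariance.

Section Unobservable.
Variables (R : realType) (n k m : nat) (A : 'M[R]_n) (B : 'M[R]_(n, k)).
Variables (F : 'M[R]_(k, n)) (C : 'M[R]_(m, n)).
Local Notation M := (A + B *m F).
Local Notation K := (Ker (Omega A B C F)).

Lemma Ker_Omega_powers : forall i : 'I_n, C *m M ^+ i *m K^T = 0.
Proof. exact/sub_Ker_mxcolP/submx_refl. Qed.

Lemma Ker_Omega_ABinvariant : ABinvariant A B K.
Proof.
exists F; apply/sub_Ker_mxcolP => i.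
rewrite trmx_mul trmxK mulmxA -(mulmxA C) mulmxE -exprSr.
have [lt_i1n | le_n_i1] := ltnP i.+1 n.
  exact: Ker_Omega_powers (Ordinal lt_i1n).
have -> : i.+1 = n by apply/eqP; rewrite eqn_leq ltn_ord le_n_i1.
exact/mulmx_Cayley_Hamilton_exp_eq0/Ker_Omega_powers.
Qed.

Lemma Ker_Omega_sub_Ker : (K <= Ker C)%MS.
Proof.
rewrite sub_KerE; case: (posnP n) => [n0 | n_gt0].
  by apply/eqP/matrixP => i [j lt_jn]; exfalso; rewrite n0 in lt_jn.
by have := Ker_Omega_powers (Ordinal n_gt0); rewrite expr0 mulmx1 => ->.
Qed.

Lemma dimKerOmega_le_dimVstar : (dimKerOmega A B C F <= dimVstar A B C)%N.
Proof.
have [_ _ Vstar_max] := Vstar_spec A B C.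
exact/mxrankS/Vstar_max/Ker_Omega_sub_Ker/Ker_Omega_ABinvariant.
Qed.

End Unobservable.

Theorem lemma5 (R : realType) (n k m : nat)
  (A : 'M[R]_n) (B : 'M[R]_(n, k)) (F : 'M[R]_(k, n)) :
  (forall C : 'M[R]_(m, n), BR1a A B F C ->
     dimKerOmega A B C F = dimVstar A B C) ->
  (forall C : 'M[R]_(m, n), BR1a A B F C <-> BR2a A B F C) /\
  (forall C : 'M[R]_(m, n), BR2a A B F C -> BR2Xa A B C).
Proof.
move=> dimKer_Vstar; split=> [C | C [C_BR1 _] C'].
  split=> [C_BR1 | []//]; split=> // C' C'_BR1.
  by rewrite -dimKer_Vstar // -dimKer_Vstar //; apply: C_BR1.
rewrite -dimKer_Vstar //; apply: leq_trans (C_BR1 C') _.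
exact: dimKerOmega_le_dimVstar.
Qed.
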